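(* Consider any step of Reverse SeqPAV at which the current set of not-yet-removed alternatives is $S$, and let $N'\subseteq N$ with $z=\sum_{i\in N'}|A_i\cap S|>0$. Suppose that at this step Reverse SeqPAV removes alternative $a\in S$ and that $z'=\sum_{i\in N'}|A_i\cap(S\setminus\{a\})|<z$. Then for every $b\in S$, $w_{\mathrm{PAV}}(S)-w_{\mathrm{PAV}}(S\setminus\{b\})\ge\frac{(z-z')^2}{z}$.
   Context: Let $N=[n]$ be a finite set of voters and $A$ a finite set of $m$ alternatives; a profile $P=(A_1,\dots,A_n)$ gives each voter $i$ a non-empty approval set $A_i\subseteq A$. For $S\subseteq A$, $w_{\mathrm{PAV}}(S)=\sum_{i\in N}\sum_{j=1}^{|A_i\cap S|}\frac1j$. Reverse SeqPAV builds a ranking from the bottom: it starts with $S=A$ and the empty ranking, and at each step picks $a\in S$ minimizing $w_{\mathrm{PAV}}(S)-w_{\mathrm{PAV}}(S\setminus\{a\})$ (ties broken arbitrarily), removes $a$ from $S$ and prepends it to the ranking, until $S$ is empty. *)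

From HB Require Import structures.
From mathcomp Require Import all_boot all_order all_algebra.
Set Implicit Arguments. Unset Strict Implicit. Unset Printing Implicit Defensive.
Import Order.TTheory GRing.Theory Num.Theory.
Local Open Scope ring_scope.

Definition profile (n : nat) (Alt : finType) := 'I_n -> {set Alt}.

Definition harm (k : nat) : rat := \sum_(j < k) ((j.+1)%:R)^-1.

Definition wPAV (n : nat) (Alt : finType) (P : profile n Alt) (S : {set Alt}) : rat :=
  \sum_(i < n) harm #|P i :&: S|.

Definition marg (n : nat) (Alt : finType) (P : profile n Alt) (S : {set Alt}) (a : Alt) : rat :=
  wPAV P S - wPAV P (S :\ a).

(* a is a valid choice of Reverse SeqPAV at the current set S
   (any tie-breaking allowed). *)
Definition rseq_choice (n : nat) (Alt : finType) (P : profile n Alt) (S : {set Alt}) (a : Alt) : Prop :=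
  a \in S /\ forall b, b \in S -> marg P S a <= marg P S b.

Inductive rseq_reachable (n : nat) (Alt : finType) (P : profile n Alt) : {set Alt} -> Prop :=
| rseq_start : rseq_reachable P setT
| rseq_step : forall S a, rseq_reachable P S -> rseq_choice P S a ->
    rseq_reachable P (S :\ a).

(* Every voter who approves the removed alternative a loses exactly 1/c of
   PAV score, where c is the number of alternatives of S she approves.  By the
   tangent-line bound 1/c >= 2t - t^2 c (i.e. (1 - tc)^2 >= 0), summing over
   the voters in N' gives marg(a) >= 2t(z - z') - t^2 z for every t, and the
   choice t = (z - z')/z yields (z - z')^2/z.  Since Reverse SeqPAV removes
   an alternative of minimal marginal contribution, the bound transfers to
   every b in S. *)
From HB Require Import structures.
From mathcomp Require Import all_boot all_order all_algebra.
From mathcomp Require Import ring.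
Import Order.TTheory GRing.Theory Num.Theory.
Local Open Scope ring_scope.

Lemma tangent_le_inv (R : realFieldType) (c t : R) :
  0 < c -> 2 * t - t ^+ 2 * c <= c^-1.
Proof.
move=> c_gt0.
suff : 0 <= c * (c^-1 - (2 * t - t ^+ 2 * c)) by rewrite pmulr_rge0 // subr_ge0.
have -> : c * (c^-1 - (2 * t - t ^+ 2 * c)) = (1 - t * c) ^+ 2.
  by rewrite mulrBr mulfV ?gt_eqF //; ring.
exact: sqr_ge0.
Qed.

Lemma harmS k : harm k.+1 = harm k + (k.+1)%:R^-1.
Proof. by rewrite /harm big_ord_recr. Qed.

Lemma harm_le m k : (m <= k)%N -> harm m <= harm k.
Proof.
move=> le_mk; rewrite /harm -(subnKC le_mk) big_split_ord /= lerDl.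
by apply: sumr_ge0 => j _; rewrite invr_ge0 ler0n.
Qed.

Section Voter.
Variables (Alt : finType) (A S : {set Alt}) (a : Alt).

Lemma card_setID1_le : (#|A :&: (S :\ a)| <= #|A :&: S|)%N.
Proof. by apply/subset_leq_card/setIS/subsetDl. Qed.

Lemma harm_card_setID1_ge0 : 0 <= harm #|A :&: S| - harm #|A :&: (S :\ a)|.
Proof. by rewrite subr_ge0 harm_le // card_setID1_le. Qed.

Lemma harm_card_setID1_ge (t : rat) :
  (#|A :&: S| - #|A :&: (S :\ a)|)%:R * (2 * t) - t ^+ 2 * #|A :&: S|%:R
    <= harm #|A :&: S| - harm #|A :&: (S :\ a)|.
Proof.
have [aAS | aAS] := boolP (a \in A :&: S).
  rewrite setIDA (cardsD1 a (A :&: S)) aAS add1n subSnn mul1r harmS.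
  by rewrite addrAC subrr add0r tangent_le_inv // ltr0n.
have -> : A :&: (S :\ a) = A :&: S.
  by rewrite setIDA; apply/setDidPl; rewrite disjoint_sym disjoints1.
by rewrite subnn subrr mul0r sub0r oppr_le0 mulr_ge0 ?sqr_ge0 ?ler0n.
Qed.

End Voter.

Lemma marg_ge_sqr_div {n : nat} {Alt : finType} (P : profile n Alt)
  (S : {set Alt}) (a : Alt) (N' : {set 'I_n}) :
  let z := \sum_(i in N') #|P i :&: S| in
  let z' := \sum_(i in N') #|P i :&: (S :\ a)| in
  (0 < z)%N -> ((z - z')%:R) ^+ 2 / z%:R <= marg P S a.
Proof.
move=> z z' z_gt0.
pose loss i := harm #|P i :&: S| - harm #|P i :&: (S :\ a)|.
have marg_loss : marg P S a = \sum_(i < n) loss i by rewrite /marg /wPAV -sumrB.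
have loss_N' : \sum_(i in N') loss i <= marg P S a.
  rewrite marg_loss [X in _ <= X](bigID (mem N')) /= lerDl.
  by apply: sumr_ge0 => i _; apply: harm_card_setID1_ge0.
set d : rat := (z - z')%:R; set t := d / z%:R.
have sum_gap : \sum_(i in N') (#|P i :&: S| - #|P i :&: (S :\ a)|)%:R = d.
  rewrite /d natrB ?leq_sum // => [|i _]; last exact: card_setID1_le.
  rewrite !natr_sum -sumrB; apply: eq_bigr => i _.
  by rewrite natrB // card_setID1_le.
have tangent_N' : \sum_(i in N') ((#|P i :&: S| - #|P i :&: (S :\ a)|)%:R * (2 * t)
    - t ^+ 2 * #|P i :&: S|%:R) <= \sum_(i in N') loss i.
  by apply: ler_sum => i _; apply: harm_card_setID1_ge.
have z_neq0 : (z%:R : rat) != 0 by rewrite pnatr_eq0 -lt0n.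
have -> : d ^+ 2 / z%:R = d * (2 * t) - t ^+ 2 * z%:R by rewrite /t; field.
apply: le_trans loss_N'; apply: le_trans tangent_N'.
by rewrite sumrB -mulr_suml -mulr_sumr sum_gap natr_sum.
Qed.

Theorem lemma1 (n : nat) (Alt : finType) (P : profile n Alt)
  (HP : forall i : 'I_n, P i != set0)
  (S : {set Alt}) (HS : rseq_reachable P S)
  (N' : {set 'I_n}) (a : Alt)
  (z := \sum_(i in N') #|P i :&: S|)
  (z' := \sum_(i in N') #|P i :&: (S :\ a)|)
  (Hz : (0 < z)%N)
  (Ha : rseq_choice P S a)
  (Hz' : (z' < z)%N) :
  forall b, b \in S ->
    marg P S b >= ((z - z')%:R) ^+ 2 / z%:R.
Proof.
move=> b bS; case: Ha => _ a_min.
exact: le_trans (marg_ge_sqr_div P S a N' Hz) (a_min b bS).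
Qed.
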